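(* Let $P$ be a monotone irreducible positive recurrent stochastic kernel on $\mathbb{N}=\{1,2,\dots\}$ with stationary distribution $\pi>0$, and let $N\ge2$. Let $P_N$ be the truncated kernel on $I_N=\{1,\dots,N\}$ defined by: for $x<N$, $P_N(x,y)=P(x,y)$ for $y<N$ and $P_N(x,N)=\sum_{z\ge N}P(x,z)$; and $P_N(N,y)=\overline{\pi}(N)^{-1}\sum_{z\ge N}\pi(z)P(z,y)$ for $y<N$, $P_N(N,N)=\overline{\pi}(N)^{-1}\sum_{z\ge N}\pi(z)\sum_{u\ge N}P(z,u)$, where $\overline{\pi}(N)=\sum_{z\ge N}\pi(z)$. Then $P_N$ is a monotone kernel on $I_N$, and it has a nonnegative Siegmund dual $\widehat{P}_N$ on $I_N$, i.e. there is a matrix $\widehat{P}_N=(\widehat{P}_N(x,y):x,y\in I_N)$ with nonnegative entries satisfying $H^S\widehat{P}_N^{\,\prime}=P_NH^S$, and $N$ is an absorbing state for $\widehat{P}_N$ (that is, $\widehat{P}_N(N,y)=\delta_{y,N}$ for $y\in I_N$).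
   Context: A stochastic kernel $Q$ on $I$ (with $I=\mathbb{N}$ or $I=I_N$) is monotone if for every $y\in I$ the map $x\mapsto\sum_{z\le y}Q(x,z)$ is decreasing in $x\in I$. The Siegmund kernel on $I_N$ is $H^S(x,y)=\mathbf{1}(x\le y)$, $x,y\in I_N$, and $M'$ denotes the transpose of a matrix $M$. *)

From HB Require Import structures.
From mathcomp Require Import all_boot all_order all_algebra.
From mathcomp Require Import all_classical all_reals all_analysis.
Set Implicit Arguments. Unset Strict Implicit. Unset Printing Implicit Defensive.
Import Order.TTheory GRing.Theory Num.Theory.
Import numFieldNormedType.Exports.
Local Open Scope classical_set_scope.
Local Open Scope ring_scope.

(* CONVENTION: the paper's state space N = {1,2,...} is encoded by nat,
   state k : nat standing for the paper's state k+1.  Likewise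
   I_N = {1,...,N} is encoded by 'I_N, i : 'I_N standing for i+1.
   In particular the paper's state N is the ordinal with value N.-1. *)

Section Kernels.
Variable R : realType.

Definition rsum (m : nat) (u : nat -> R) : R :=
  limn (fun n => \sum_(m <= i < n) u i).

Definition stochastic (P : nat -> nat -> R) : Prop :=
  (forall x y, 0 <= P x y) /\ (forall x, (series (P x) @ \oo --> (1:R))).

Fixpoint kpow (P : nat -> nat -> R) (n : nat) : nat -> nat -> R :=
  match n with
  | 0 => fun x y => (x == y)%:R
  | n'.+1 => fun x y => rsum 0 (fun z => kpow P n' x z * P z y)
  end.

Definition irreducible (P : nat -> nat -> R) : Prop :=
  forall x y, exists n, 0 < kpow P n x y.

(* fpass P n x y = probability that the first visit to y (at a time >= 1)
   happens at time n.+1, starting from x. *)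
Fixpoint fpass (P : nat -> nat -> R) (n : nat) : nat -> nat -> R :=
  match n with
  | 0 => fun x y => P x y
  | n'.+1 => fun x y => rsum 0 (fun z => if z == y then 0 else P x z * fpass P n' z y)
  end.

Definition positive_recurrent (P : nat -> nat -> R) : Prop :=
  forall x,
    (series (fun n => fpass P n x x) @ \oo --> (1:R)) /\
    cvg (series (fun n => n.+1%:R * fpass P n x x) @ \oo).

Definition stationary_distribution (P : nat -> nat -> R) (pi : nat -> R) : Prop :=
  (forall x, 0 <= pi x) /\ (series pi @ \oo --> (1:R)) /\
  (forall y, (series (fun x => pi x * P x y) @ \oo --> pi y)).

Definition kmonotone (P : nat -> nat -> R) : Prop :=
  forall y x x', (x <= x')%N ->
    \sum_(0 <= z < y.+1) P x' z <= \sum_(0 <= z < y.+1) P x z.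

Definition stochastic_mx (N : nat) (Q : 'M[R]_N) : Prop :=
  (forall x y, 0 <= Q x y) /\ (forall x, \sum_(y < N) Q x y = 1).

Definition monotone_mx (N : nat) (Q : 'M[R]_N) : Prop :=
  stochastic_mx Q /\
  forall y x x' : 'I_N, (x <= x')%N ->
    \sum_(z < N | (z <= y)%N) Q x' z <= \sum_(z < N | (z <= y)%N) Q x z.

Definition siegmund (N : nat) : 'M[R]_N := \matrix_(i, j) ((i <= j)%N)%:R.

(* tail mass pibar(N) = sum_{z >= N} pi(z)  (paper's N is index N.-1) *)
Definition pibar (pi : nat -> R) (N : nat) : R := rsum N.-1 pi.

Definition truncP (P : nat -> nat -> R) (pi : nat -> R) (N : nat) : 'M[R]_N :=
  \matrix_(i, j)
    if (i < N.-1)%N then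
      (if (j < N.-1)%N then P i j else rsum N.-1 (P i))
    else
      (if (j < N.-1)%N then
         (pibar pi N)^-1 * rsum N.-1 (fun z => pi z * P z j)
       else
         (pibar pi N)^-1 * rsum N.-1 (fun z => pi z * rsum N.-1 (P z))).

End Kernels.

(* Rows x < N of P_N are the rows of P with the mass beyond N lumped onto N,
   so their cumulative sums below N are those of P; row N is the
   pi-weighted average of the lumped rows z >= N.  By monotonicity of P each
   cumulative sum of a row z >= N is at most that of any row x < N, hence so
   is their average, and P_N is monotone.  For a monotone stochastic matrix Q
   with cumulative row sums F(x, y) = sum_{z <= y} Q(x, z), the Siegmund dual
   is Phat(x, y) = F(y, x) - F(y + 1, x) with F(N + 1, .) = 0: it is
   nonnegative by monotonicity, H^S Phat' = Q H^S telescopes, and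
   F(., N) = 1 makes N absorbing. *)

From HB Require Import structures.
From mathcomp Require Import all_boot all_order all_algebra.
From mathcomp Require Import all_classical all_reals all_analysis.
From mathcomp Require Import ring.
Import Order.TTheory GRing.Theory Num.Theory.
Import numFieldNormedType.Exports.
Local Open Scope classical_set_scope.
Local Open Scope ring_scope.

Section TailSums.
Context {R : realType}.
Implicit Types (u v : nat -> R) (m : nat).

Lemma cvg_tail_sum u m : cvgn (series u) ->
  (\sum_(m <= i < k) u i) @[k --> \oo] --> limn (series u) - \sum_(i < m) u i.
Proof.
move=> cu.
have lim_tail : series u k - series u m @[k --> \oo] --> limn (series u) - series u m.
  exact: cvgB cu (cvg_cst _).
have -> : \sum_(i < m) u i = series u m by rewrite /series /= big_mkord.
apply: cvg_trans lim_tail; apply: near_eq_cvg; near=> k; rewrite /= sub_series_geq //.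
by near: k; exact: nbhs_infty_ge.
Unshelve. all: by end_near.
Qed.

Lemma cvg_rsum u m : cvgn (series u) -> (\sum_(m <= i < k) u i) @[k --> \oo] --> rsum m u.
Proof. by move=> /(cvg_tail_sum _ m)/cvgP. Qed.

Lemma rsumE u m : cvgn (series u) -> rsum m u = limn (series u) - \sum_(i < m) u i.
Proof. by move=> /(cvg_tail_sum _ m)/cvg_lim; apply. Qed.

Lemma rsumS u m : cvgn (series u) -> rsum m u = u m + rsum m.+1 u.
Proof. by move=> cu; rewrite !rsumE // big_ord_recr /=; ring. Qed.

Lemma rsum_ge0 u m : cvgn (series u) -> (forall i, (m <= i)%N -> 0 <= u i) ->
  0 <= rsum m u.
Proof.
move=> cu u_ge0; apply: limr_ge; first exact: cvgP (cvg_rsum _ m cu).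
by near=> k; rewrite big_nat_cond sumr_ge0 // => i /andP[/andP[/u_ge0]].
Unshelve. all: by end_near.
Qed.

Lemma rsum_gt0 u m : cvgn (series u) -> (forall i, (m <= i)%N -> 0 <= u i) ->
  0 < u m -> 0 < rsum m u.
Proof.
move=> cu u_ge0 um_gt0; rewrite rsumS // ltr_pwDl //.
by apply: rsum_ge0 => // i /ltnW; exact: u_ge0.
Qed.

Lemma ler_rsum u v m : cvgn (series u) -> cvgn (series v) ->
  (forall i, (m <= i)%N -> u i <= v i) -> rsum m u <= rsum m v.
Proof.
move=> cu cv uv; apply: ler_lim.
- exact: cvgP (cvg_rsum _ m cu).
- exact: cvgP (cvg_rsum _ m cv).
by near=> k; rewrite big_nat_cond [leRHS]big_nat_cond ler_sum // => i /andP[/andP[/uv]].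
Unshelve. all: by end_near.
Qed.

Lemma rsumZ u m c : cvgn (series u) -> rsum m (fun i => c * u i) = c * rsum m u.
Proof.
move=> cu; apply: cvg_lim => //; under eq_cvg do rewrite -mulr_sumr.
exact: cvgMl_tmp (cvg_rsum _ m cu).
Qed.

Lemma rsum_sum (I : Type) (r : seq I) (P : pred I) (f : I -> nat -> R) m :
  (forall j, P j -> cvgn (series (f j))) ->
  rsum m (fun i => \sum_(j <- r | P j) f j i) = \sum_(j <- r | P j) rsum m (f j).
Proof.
move=> cf; apply: cvg_lim => //; under eq_cvg do rewrite exchange_big /=.
apply: cvg_big => // [|j Pj]; first exact: add_continuous.
exact: cvg_rsum (cf j Pj).
Qed.

Lemma is_cvg_series_sum (I : Type) (r : seq I) (P : pred I) (f : I -> nat -> R) :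
  (forall j, P j -> cvgn (series (f j))) ->
  cvgn (series (fun i => \sum_(j <- r | P j) f j i)).
Proof.
move=> cf; elim: r => [|j r IH].
  under eq_fun do rewrite big_nil.
  suff -> : series (fun=> 0 : R) = cst 0 by exact: is_cvg_cst.
  by apply/funext => k; rewrite /series /= big1.
under eq_fun do rewrite big_cons.
case: (boolP (P j)) => Pj; last exact: IH.
exact: is_cvg_seriesD (cf j Pj) IH.
Qed.

End TailSums.

Section SiegmundDual.
Context {R : realType} {n : nat} (Q : 'M[R]_n.+1).
Hypothesis Q_mono : monotone_mx Q.

(* The junk row x = n.+1 is 0, which is where the telescoping sum below ends. *)
Definition cumul (x : nat) (y : 'I_n.+1) : R :=
  if (x < n.+1)%N then \sum_(z < n.+1 | (z <= y)%N) Q (inord x) z else 0.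

Definition siegmund_dual : 'M[R]_n.+1 := \matrix_(x, y) (cumul y x - cumul y.+1 x).

Lemma cumul_last (x : nat) (y : 'I_n.+1) : (x < n.+1)%N -> val y = n -> cumul x y = 1.
Proof.
move=> x_small y_last; rewrite /cumul x_small -(Q_mono.1.2 (inord x)).
by apply: eq_bigl => z; rewrite y_last -ltnS ltn_ord.
Qed.

Lemma siegmund_dual_ge0 x y : 0 <= siegmund_dual x y.
Proof.
have [[Q_ge0 _] Q_cdf_decr] := Q_mono.
rewrite mxE subr_ge0 /cumul ltn_ord; case: ifP => y_small.
  by apply: Q_cdf_decr; rewrite /= !inordK // ltnW.
by apply: sumr_ge0 => z _; exact: Q_ge0.
Qed.

Lemma mul_siegmund_dual :
  siegmund R n.+1 *m siegmund_dual^T = Q *m siegmund R n.+1.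
Proof.
apply/matrixP => x y; rewrite !mxE.
have -> : \sum_j siegmund R n.+1 x j * siegmund_dual^T j y
    = \sum_(x <= j < n.+1) (cumul j y - cumul j.+1 y).
  rewrite big_geq_mkord [RHS]big_mkcond /=; apply: eq_bigr => j _.
  by rewrite !mxE; case: (x <= j)%N; rewrite ?mul1r ?mul0r.
rewrite (@telescope_sumr_eq _ x n.+1 (fun j => - cumul j y)) ?(ltnW (ltn_ord x)) //.
  rewrite /cumul ltnn ltn_ord oppr0 sub0r opprK inord_val big_mkcond /=.
  by apply: eq_bigr => j _; rewrite mxE; case: (j <= y)%N; rewrite ?mulr1 ?mulr0.
by move=> j _; rewrite opprK addrC.
Qed.

Lemma siegmund_dual_absorbing (x y : 'I_n.+1) :
  val x = n -> siegmund_dual x y = (val y == n)%:R.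
Proof.
move=> x_last; rewrite mxE cumul_last //; case: eqVneq => [y_last|y_nlast].
  by rewrite /cumul y_last ltnn subr0.
by rewrite cumul_last ?subrr // ltnS ltn_neqAle y_nlast -ltnS ltn_ord.
Qed.

End SiegmundDual.

Section Truncation.
Context {R : realType} (P : nat -> nat -> R) (pi : nat -> R) (n : nat).
Hypothesis P_ge0 : forall x y, 0 <= P x y.
Hypothesis P_row1 : forall x, series (P x) @ \oo --> (1 : R).
Hypothesis P_mono : kmonotone P.
Hypothesis pi_ge0 : forall x, 0 <= pi x.
Hypothesis pi_summable : cvgn (series pi).
Hypothesis piP_summable : forall y, cvgn (series (fun x => pi x * P x y)).
Hypothesis pibar_gt0 : 0 < pibar pi n.+1.

Local Notation Q := (truncP P pi n.+1).

Definition lumped (z : nat) (j : 'I_n.+1) : R :=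
  if (j < n)%N then P z j else rsum n (P z).

Lemma truncPE (i j : 'I_n.+1) : Q i j =
  if (i < n)%N then lumped i j
  else (pibar pi n.+1)^-1 * rsum n (fun z => pi z * lumped z j).
Proof. by rewrite mxE /lumped /=; case: ifP => _ //; case: ifP. Qed.

Lemma rsum_row z : rsum n (P z) = 1 - \sum_(j < n) P z j.
Proof. by rewrite rsumE ?(cvg_lim _ (P_row1 z)) //; exact: cvgP (P_row1 z). Qed.

Lemma lumped_ge0 z j : 0 <= lumped z j.
Proof.
rewrite /lumped; case: ifP => _ //.
by apply: rsum_ge0 => [|i _]; [exact: cvgP (P_row1 z) | exact: P_ge0].
Qed.

Lemma sum_lumped z : \sum_j lumped z j = 1.
Proof.
rewrite big_ord_recr /= /lumped ltnn rsum_row addrC.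
by rewrite (eq_bigr (fun j : 'I_n => P z j)) ?subrK // => j _; rewrite /= ltn_ord.
Qed.

Lemma sum_lumped_le z (y : 'I_n.+1) : (y < n)%N ->
  \sum_(j < n.+1 | (j <= y)%N) lumped z j = \sum_(0 <= j < y.+1) P z j.
Proof.
move=> y_small; rewrite big_mkord (big_ord_widen n.+1 (P z) (ltn_ord y)).
apply: eq_big => [j|j]; rewrite ?ltnS // => j_le_y.
by rewrite /lumped (leq_ltn_trans j_le_y y_small).
Qed.

Lemma is_cvg_series_pi_lumped j : cvgn (series (fun z => pi z * lumped z j)).
Proof.
rewrite /lumped; case: (j < n)%N; first exact: piP_summable.
suff -> : (fun z => pi z * rsum n (P z)) = pi - (fun z => \sum_(i < n) pi z * P z i).
  by apply: is_cvg_seriesB pi_summable _; apply: is_cvg_series_sum => i _.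
by apply/funext => z; rewrite rsum_row mulrBr mulr1 mulr_sumr.
Qed.

Lemma sum_truncP_last (i : 'I_n.+1) (A : pred 'I_n.+1) : ~~ (i < n)%N ->
  \sum_(j | A j) Q i j =
  (pibar pi n.+1)^-1 * rsum n (fun z => pi z * \sum_(j | A j) lumped z j).
Proof.
move=> /negbTE i_last; under eq_bigr do rewrite truncPE i_last.
rewrite -mulr_sumr -rsum_sum => [|j _]; last exact: is_cvg_series_pi_lumped.
by under [in RHS]eq_fun do rewrite mulr_sumr.
Qed.

Lemma tail_average_le (f : nat -> R) x :
  cvgn (series (fun z => pi z * f z)) -> (forall z, (n <= z)%N -> f z <= f x) ->
  (pibar pi n.+1)^-1 * rsum n (fun z => pi z * f z) <= f x.
Proof.
move=> cf f_le; rewrite ler_pdivrMl // mulrC -rsumZ //.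
apply: ler_rsum => // [|z /f_le fz_le]; first exact: is_cvg_seriesZ.
by rewrite mulrC ler_wpM2r.
Qed.

Lemma truncP_stochastic : stochastic_mx Q.
Proof.
split=> [i j|i].
  rewrite truncPE; case: ifP => _; first exact: lumped_ge0.
  apply: mulr_ge0; first by rewrite invr_ge0 ltW.
  apply: rsum_ge0 => [|z _]; first exact: is_cvg_series_pi_lumped.
  exact: mulr_ge0 (pi_ge0 z) (lumped_ge0 z j).
case: (ltnP i n) => [i_small|i_last].
  by under eq_bigr do rewrite truncPE i_small; exact: sum_lumped.
rewrite (sum_truncP_last i xpredT) -?leqNgt //.
by under eq_fun do rewrite sum_lumped mulr1; rewrite mulVf ?gt_eqF.
Qed.

Lemma truncP_monotone : monotone_mx Q.
Proof.
split=> [|y x x' x_le_x']; first exact: truncP_stochastic.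
have [y_small|y_big] := ltnP y n; last first.
  have row_le_y (i : 'I_n.+1) : \sum_(j < n.+1 | (j <= y)%N) Q i j = 1.
    rewrite -(truncP_stochastic.2 i); apply: eq_bigl => j.
    by rewrite (leq_trans _ y_big) // -ltnS.
  by rewrite !row_le_y.
pose cdf z := \sum_(0 <= j < y.+1) P z j.
have cdf_truncP (i : 'I_n.+1) : \sum_(j < n.+1 | (j <= y)%N) Q i j =
    if (i < n)%N then cdf i else (pibar pi n.+1)^-1 * rsum n (fun z => pi z * cdf z).
  case: ifP => i_small.
    by under eq_bigr do rewrite truncPE i_small; exact: sum_lumped_le.
  by rewrite sum_truncP_last ?i_small //; under eq_fun do rewrite sum_lumped_le //.
rewrite !cdf_truncP; case: ifP => x'_small; case: ifP => x_small //.
- exact: P_mono.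
- by rewrite (leq_ltn_trans x_le_x' x'_small) in x_small.
apply: tail_average_le => [|z z_big]; last exact/P_mono/ltnW/(leq_trans x_small).
under eq_fun do rewrite /cdf mulr_sumr.
exact: is_cvg_series_sum.
Qed.

End Truncation.

Theorem proposition4 (R : realType) (P : nat -> nat -> R) (pi : nat -> R) (N : nat) :
  stochastic P -> kmonotone P -> irreducible P -> positive_recurrent P ->
  stationary_distribution P pi -> (forall x, 0 < pi x) ->
  (2 <= N)%N ->
  monotone_mx (truncP P pi N) /\
  exists Phat : 'M[R]_N,
    (forall x y, 0 <= Phat x y) /\
    siegmund R N *m Phat^T = truncP P pi N *m siegmund R N /\
    (forall x y : 'I_N, val x = N.-1 -> Phat x y = (val y == N.-1)%:R).
Proof.
move=> [P_ge0 P_row1] P_mono _ _ [pi_ge0 [pi_sum1 pi_stationary]] pi_gt0.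
case: N => [|n] // _.
have pi_summable : cvgn (series pi) := cvgP _ pi_sum1.
have pibar_gt0 : 0 < pibar pi n.+1 by apply: rsum_gt0.
have Q_mono : monotone_mx (truncP P pi n.+1).
  apply: truncP_monotone => // y; exact: cvgP (pi_stationary y).
split=> //; exists (siegmund_dual (truncP P pi n.+1)).
split; first exact: siegmund_dual_ge0.
split; first exact: mul_siegmund_dual.
exact: siegmund_dual_absorbing.
Qed.
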